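(* Let $n\ge2$ and let $\mathfrak{g}_n$ be the Lie algebra defined in the context. Then $\mathfrak{g}_n$ admits $\nu_n=T_{n-2}+1=\frac{(n-1)(n-2)}{2}+1$ functionally independent Casimir invariants, of which $T_{n-2}$ are the central elements $z_{i,j}$; hence there is only one nontrivial Casimir invariant, up to multiplication by scalars and by central elements. Equivalently, the matrix $A=\big(\sum_k c_{ij}^k x_k\big)_{i,j}$ formed from the structure constants of $\mathfrak{g}_n$ in commuting variables has rank $2(n-1)$.
   Context: $\mathbb{K}$ is $\mathbb{R}$ or $\mathbb{C}$; $T_m=m(m+1)/2$. For $n\ge2$, $\mathfrak{g}_n$ is the Lie algebra of dimension $T_n$ with basis $h,x_-,x_+$, $y_{i,\pm}$ ($1\le i\le n-2$), $z_{i,j}$ ($1\le i\le j\le n-2$), whose nonzero brackets (up to antisymmetry) are $[x_+,x_-]=h$, $[h,x_\pm]=\pm2x_\pm$, $[h,y_{i,\pm}]=\pm y_{i,\pm}$, $[x_-,y_{i,+}]=y_{i,-}$, $[x_+,y_{i,-}]=y_{i,+}$, $[y_{i,+},y_{j,-}]=z_{\min(i,j),\max(i,j)}$; all other brackets of basis elements vanish, so the centre is spanned by the $z_{i,j}$. With structure constants $[x_i,x_j]=\sum_k c_{ij}^kx_k$ in a basis $x_1,\dots,x_d$, the number of functionally independent Casimir invariants (functions on $\mathfrak{g}_n^*$ Poisson-commuting, for the Lie–Poisson bracket, with all linear functions) equals $\dim\mathfrak{g}_n-\operatorname{rank}A$ with $A=\big(\sum_kc_{ij}^kx_k\big)_{i,j=1}^d$,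 the $x_k$ being commuting variables. *)

From HB Require Import structures.
From mathcomp Require Import all_boot all_order all_algebra.
From mathcomp Require Import fraction.
From mathcomp Require Import mpoly.
Set Implicit Arguments. Unset Strict Implicit. Unset Printing Implicit Defensive.
Import Order.TTheory GRing.Theory Num.Theory.
Local Open Scope ring_scope.

Definition T (m : nat) : nat := ((m * m.+1) %/ 2)%N.

(* Basis of g_n, with m = n - 2:
   inl (inl 0) = h, inl (inl 1) = x_-, inl (inl 2) = x_+,
   inl (inr (i, true)) = y_{i,+}, inl (inr (i, false)) = y_{i,-},
   inr (i, j) with i <= j = z_{i,j}. *)
Definition zpred (m : nat) (p : 'I_m * 'I_m) : bool := (p.1 <= p.2)%N.
Definition zidx_t (m : nat) := {p : 'I_m * 'I_m | zpred p}.
Definition gbasis (m : nat) : finType :=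
  (('I_3 + ('I_m * bool)) + zidx_t m)%type.

Section Basis.
Variable m : nat.
Definition bh : gbasis m := inl (inl (@Ordinal 3 0 isT)).
Definition bxm : gbasis m := inl (inl (@Ordinal 3 1 isT)).
Definition bxp : gbasis m := inl (inl (@Ordinal 3 2 isT)).
Definition by_ (i : 'I_m) (s : bool) : gbasis m := inl (inr (i, s)).
Lemma zpred_swap (i j : 'I_m) : (i <= j)%N = false -> zpred (j, i).
Proof. by move=> h; rewrite /zpred /=; apply: ltnW; rewrite ltnNge h. Qed.
Definition bz (i j : 'I_m) : gbasis m :=
  (if (i <= j)%N as b return ((i <= j)%N = b -> gbasis m)
   then fun h => inr (exist (fun p => is_true (zpred p)) (i, j) h)
   else fun h => inr (exist (fun p => is_true (zpred p)) (j, i) (zpred_swap h)))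
  (erefl _).
End Basis.

(* "Positive" brackets: brp a b = Some (c, e) means [a, b] = c e. *)
Definition brp (K : numFieldType) (m : nat) (a b : gbasis m) : option (K * gbasis m) :=
  match a, b with
  | inl (inl x), inl (inl y) =>
      match nat_of_ord x, nat_of_ord y with
      | 2, 1 => Some (1, bh m)            (* [x_+, x_-] = h *)
      | 0, 2 => Some (2%:R, bxp m)        (* [h, x_+] = 2 x_+ *)
      | 0, 1 => Some (- 2%:R, bxm m)      (* [h, x_-] = -2 x_- *)
      | _, _ => None
      end
  | inl (inl x), inl (inr (i, s)) =>
      match nat_of_ord x, s with
      | 0, true => Some (1, by_ i true)       (* [h, y_{i,+}] = y_{i,+} *)
      | 0, false => Some (-1, by_ i false)    (* [h, y_{i,-}] = -y_{i,-} *)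
      | 1, true => Some (1, by_ i false)      (* [x_-, y_{i,+}] = y_{i,-} *)
      | 2, false => Some (1, by_ i true)      (* [x_+, y_{i,-}] = y_{i,+} *)
      | _, _ => None
      end
  | inl (inr (i, true)), inl (inr (j, false)) =>
      Some (1, bz i j)
  | _, _ => None
  end.

Definition br (K : numFieldType) (m : nat) (a b : gbasis m) : option (K * gbasis m) :=
  match brp K a b with
  | Some ce => Some ce
  | None => match brp K b a with
            | Some (c, e) => Some (- c, e)
            | None => None
            end
  end.

Definition dimg (m : nat) : nat := #|gbasis m|.

Definition Aentry (K : numFieldType) (m : nat) (a b : gbasis m) : {mpoly K[dimg m]} :=
  match br K a b with
  | Some (c, e) => c *: 'X_(enum_rank e)
  | None => 0
  end.

Definition Amx (K : numFieldType) (m : nat) : 'M[{fraction {mpoly K[dimg m]}}]_(dimg m) :=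
  \matrix_(i, j) tofrac (Aentry K (enum_val i) (enum_val j)).

Definition ncasimir (K : numFieldType) (m : nat) : nat := (dimg m - \rank (Amx K m))%N.

Definition central_basis (K : numFieldType) (m : nat) : {set gbasis m} :=
  [set b | [forall a, br K a b == None]].

From HB Require Import structures.
From mathcomp Require Import all_boot all_order all_algebra.
From mathcomp Require Import fraction.
From mathcomp Require Import mpoly.
From mathcomp Require Import zify.
Set Implicit Arguments. Unset Strict Implicit. Unset Printing Implicit Defensive.
Import Order.TTheory GRing.Theory Num.Theory.
Local Open Scope ring_scope.

(* The central elements z_{i,j} give zero rows and columns of A, so the rank
   of A is that of the square block indexed by h, x_-, x_+ and the y_{i,+-}.
   That block is skew-symmetric of odd size 2(n-2) + 3, hence singular, so
   rank A <= 2(n-1).  Conversely, the minor with rows x_+, x_-, y_{i,+-} and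
   the partner columns x_-, x_+, y_{i,-+} is a nonzero polynomial: at the
   point where the coordinates of h and of the z_{i,i} are 1 and all others
   are 0 it specialises to a diagonal matrix with entries +-1. *)

Section RankSubmatrix.
Variable F : fieldType.

Lemma mxrank_rowsub_le m n k (f : 'I_k -> 'I_m) (A : 'M[F]_(m, n)) :
  (\rank (rowsub f A) <= \rank A)%N.
Proof. exact/mxrankS/rowsub_sub. Qed.

Lemma mxrank_colsub_le m n k (g : 'I_k -> 'I_n) (A : 'M[F]_(m, n)) :
  (\rank (colsub g A) <= \rank A)%N.
Proof.
by rewrite -mxrank_tr -[leqRHS]mxrank_tr trmx_mxsub mxrank_rowsub_le.
Qed.

Lemma mxrank_mxsub_le m n m' n' (f : 'I_m' -> 'I_m) (g : 'I_n' -> 'I_n)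
    (A : 'M[F]_(m, n)) :
  (\rank (mxsub f g A) <= \rank A)%N.
Proof.
by rewrite mxsubrc; exact: leq_trans (mxrank_rowsub_le _ _) (mxrank_colsub_le _ _).
Qed.

Lemma mxrank_rowsub_supp m n k (f : 'I_k -> 'I_m) (A : 'M[F]_(m, n)) :
  (forall i j, i \notin codom f -> A i j = 0) -> \rank (rowsub f A) = \rank A.
Proof.
move=> A0; apply/eqP; rewrite eqn_leq mxrank_rowsub_le /=.
apply/mxrankS/row_subP => i.
have [/codomP[l ->]|fNi] := boolP (i \in codom f).
  by rewrite -row_rowsub row_sub.
by rewrite (_ : row i A = 0) ?sub0mx //; apply/rowP => j; rewrite !mxE A0.
Qed.

Lemma mxrank_mxsub_supp m n m' n' (f : 'I_m' -> 'I_m) (g : 'I_n' -> 'I_n)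
    (A : 'M[F]_(m, n)) :
    (forall i j, i \notin codom f -> A i j = 0) ->
    (forall i j, j \notin codom g -> A i j = 0) ->
  \rank (mxsub f g A) = \rank A.
Proof.
move=> A0r A0c; rewrite mxsubrc mxrank_rowsub_supp => [|i j fNi]; last first.
  by rewrite mxE A0r.
rewrite -mxrank_tr -[RHS]mxrank_tr trmx_mxsub mxrank_rowsub_supp // => j i gNj.
by rewrite mxE A0c.
Qed.

End RankSubmatrix.

Lemma det_skew_odd (R : idomainType) n (A : 'M[R]_n) :
  2%:R != 0 :> R -> A^T = - A -> odd n -> \det A = 0.
Proof.
move=> two_neq0 skewA odd_n.
have detAN : \det A = - \det A.
  by rewrite -{1}det_tr skewA -scaleN1r detZ -signr_odd odd_n mulN1r.
have : 2%:R * \det A == 0 by rewrite mulr_natl mulr2n {2}detAN subrr.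
by rewrite mulf_eq0 (negbTE two_neq0) => /eqP.
Qed.

Lemma mxrank_skew_odd (F : fieldType) n (A : 'M[F]_n) :
  2%:R != 0 :> F -> A^T = - A -> odd n -> (\rank A < n)%N.
Proof.
move=> two_neq0 skewA odd_n; rewrite ltn_neqAle rank_leq_row andbT.
apply: contraTneq isT => full.
have : A \in unitmx by rewrite -row_free_unit /row_free full.
by rewrite unitmxE unitfE det_skew_odd ?eqxx.
Qed.

Lemma unitmx_tofrac_meval (R : idomainType) k n (M : 'M[{mpoly R[k]}]_n)
    (v : 'I_k -> R) :
  (\det M).@[v] != 0 -> map_mx (@tofrac _) M \in unitmx.
Proof.
by rewrite unitmxE det_map_mx unitfE tofrac_eq0; apply: contraNneq => ->; rewrite meval0.
Qed.

Lemma T_binomial m : T m = 'C(m.+1, 2).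
Proof. by rewrite bin2 /T divn2 mulnC. Qed.

Lemma card_zidx m : #|{: zidx_t m}| = T m.
Proof.
rewrite card_sig T_binomial -sum1_card.
have -> : (\sum_(p in [pred p : 'I_m * 'I_m | zpred p]) 1 =
    \sum_(j < m) \sum_(i < m | (i < j.+1)%N) 1)%N.
  rewrite (exchange_big_dep xpredT) //= pair_big_dep /=.
  by apply: eq_bigl => -[i j]; rewrite inE.
rewrite -bin2_sum big_nat_recl // big_mkord add0n; apply: eq_bigr => j _.
by rewrite (big_ord_narrow_cond (ltn_ord j) (P := xpredT)) sum1_card card_ord.
Qed.

Lemma dimgE m : dimg m = (3 + m * 2 + T m)%N.
Proof. by rewrite /dimg !card_sum card_ord card_prod card_ord card_bool card_zidx. Qed.

Section Brackets.
Variables (K : numFieldType) (m : nat).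

Lemma br_inr_l p (b : gbasis m) : br K (inr p) b = None.
Proof. by rewrite /br; case: b => [[[[|[|[|x]]] ?]|[i [|]]]|]. Qed.

Lemma br_inr_r p (b : gbasis m) : br K b (inr p) = None.
Proof. by rewrite /br; case: b => [[[[|[|[|x]]] ?]|[i [|]]]|]. Qed.

Lemma central_basisE : central_basis K m = [set inr p | p : zidx_t m].
Proof.
apply/setP => b; rewrite inE; apply/forallP/imsetP => [|[p _ ->] a]; last first.
  by rewrite br_inr_r.
case: b => [[x|[i s]]|p] b_central; last by exists p.
- case: x b_central => [[|[|[|x]]] ?] b_central //.
  + by have := b_central (bxp m).
  + by have := b_central (bh m).
  + by have := b_central (bh m).
- by have := b_central (bh m); case: s b_central.
Qed.

Lemma brp_swap_None (a b : gbasis m) : brp K a b <> None -> brp K b a = None.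
Proof.
case: a => [[x|[i s]]|p]; case: b => [[y|[j t]]|q] //.
- by case: x => [[|[|[|x]]] ?]; case: y => [[|[|[|y]]] ?].
- by case: x => [[|[|[|x]]] ?]; case: t.
- by case: y => [[|[|[|y]]] ?]; case: s.
- by case: s; case: t.
Qed.

Lemma Aentry_swap (a b : gbasis m) : Aentry K b a = - Aentry K a b.
Proof.
rewrite /Aentry /br.
case ab: (brp K a b) => [[c e]|]; first by rewrite brp_swap_None ?ab //= scaleNr.
by case: (brp K b a) => [[c e]|] /=; rewrite ?scaleNr ?opprK ?oppr0.
Qed.

Lemma Amx_skew : (Amx K m)^T = - Amx K m.
Proof. by apply/matrixP => i j; rewrite !mxE Aentry_swap tofracN. Qed.

End Brackets.

Section RankBounds.
Variables (K : numFieldType) (m : nat).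
Local Notation N := (dimg m).
Local Notation A := (Amx K m).

Definition xy_elt (w : option 'I_m * bool) : gbasis m :=
  match w with
  | (None, true) => bxp m
  | (None, false) => bxm m
  | (Some i, s) => by_ i s
  end.

Definition xy_partner (w : option 'I_m * bool) : gbasis m := xy_elt (w.1, ~~ w.2).

Definition h_or_zdiag (e : gbasis m) : bool :=
  match e with
  | inl (inl o) => nat_of_ord o == 0%N
  | inl (inr _) => false
  | inr p => (sval p).1 == (sval p).2
  end.

Lemma h_or_zdiag_bz (i j : 'I_m) : h_or_zdiag (bz i j) = (i == j).
Proof.
rewrite /bz; move: (erefl (i <= j)%N).
by case: {2 3}(i <= j)%N => ij /=; last rewrite eq_sym.
Qed.

Definition zdiag_point : 'I_N -> K := fun k => (h_or_zdiag (enum_val k))%:R.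

Lemma Aentry_zdiag_point a b : (Aentry K a b).@[zdiag_point] =
  if br K a b is Some (c, e) then c * (h_or_zdiag e)%:R else 0.
Proof.
rewrite /Aentry; case: br => [[c e]|]; last exact: meval0.
by rewrite mevalZ mevalXU /zdiag_point enum_rankK.
Qed.

Lemma Aentry_xy_zdiag_point w w' :
  (Aentry K (xy_elt w) (xy_partner w')).@[zdiag_point] =
  (if w.2 then 1 else -1) *+ (w == w').
Proof.
have eq_Some (i j : 'I_m) : (Some i == Some j) = (i == j) by [].
rewrite Aentry_zdiag_point.
case: w => [[i|] s]; case: w' => [[j|] t]; case: s; case: t => //=;
  rewrite ?h_or_zdiag_bz ?xpair_eqE /= ?andbT ?andbF ?eq_Some
    ?mulr0 ?mul0r ?mulr1n ?mulr0n ?mulr1 ?mul1r //.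
all: by rewrite mulN1r eq_sym -mulNrn; case: eqP.
Qed.

Lemma rank_Amx_ge : (2 * m.+1 <= \rank A)%N.
Proof.
pose W := (option 'I_m * bool)%type.
pose rsel (k : 'I_#|{: W}|) : 'I_N := enum_rank (xy_elt (enum_val k)).
pose csel (k : 'I_#|{: W}|) : 'I_N := enum_rank (xy_partner (enum_val k)).
pose M : 'M_#|{: W}| :=
  \matrix_(k, l) Aentry K (xy_elt (enum_val k)) (xy_partner (enum_val l)).
have subAE : mxsub rsel csel A = map_mx (@tofrac _) M.
  by apply/matrixP => k l; rewrite !mxE !enum_rankK.
have detM : (\det M).@[zdiag_point] != 0.
  rewrite -det_map_mx (_ : map_mx _ M =
      diag_mx (\row_k (if (enum_val k).2 then 1 else -1))); last first.
    by apply/matrixP => k l; rewrite !mxE -(inj_eq enum_val_inj) -Aentry_xy_zdiag_point.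
  rewrite det_diag; apply/prodf_neq0 => k _; rewrite mxE.
  by case: ifP; rewrite ?oppr_eq0 oner_neq0.
have := mxrank_mxsub_le rsel csel A.
rewrite subAE mxrank_unit ?(unitmx_tofrac_meval detM) //.
by rewrite /W card_prod card_option card_ord card_bool mulnC.
Qed.

Lemma two_fraction_neq0 : 2%:R != 0 :> {fraction {mpoly K[N]}}.
Proof.
by rewrite -(rmorph_nat (@tofrac _)) tofrac_eq0 -mpolyC_nat mpolyC_eq0 pnatr_eq0.
Qed.

Lemma rank_Amx_lt : (\rank A < 2 * m + 3)%N.
Proof.
pose U := ('I_3 + 'I_m * bool)%type.
pose nsel (l : 'I_#|{: U}|) : 'I_N := enum_rank (inl (enum_val l) : gbasis m).
have central_out i : i \notin codom nsel -> exists p, enum_val i = inr p.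
  case Ei: (enum_val i) => [u|p] nsel_i; last by exists p.
  by case/codomP: nsel_i; exists (enum_rank u); rewrite /nsel enum_rankK -Ei enum_valK.
rewrite -(mxrank_mxsub_supp (f := nsel) (g := nsel)); first last.
- by move=> i j /central_out[p Ej]; rewrite mxE Ej /Aentry br_inr_r tofrac0.
- by move=> i j /central_out[p Ei]; rewrite mxE Ei /Aentry br_inr_l tofrac0.
have card_U : #|{: U}| = (2 * m + 3)%N.
  by rewrite card_sum card_ord card_prod card_ord card_bool; lia.
rewrite -card_U; apply: mxrank_skew_odd two_fraction_neq0 _ _.
  by rewrite trmx_mxsub Amx_skew; apply/matrixP => k l; rewrite !mxE.
by rewrite card_U oddD oddM.
Qed.

End RankBounds.

Theorem proposition3p4 (K : numFieldType) (n : nat) (hn : (2 <= n)%N) :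
  dimg (n - 2) = T n /\
  \rank (Amx K (n - 2)) = (2 * (n - 1))%N /\
  ncasimir K (n - 2) = (T (n - 2) + 1)%N /\
  #|central_basis K (n - 2)| = T (n - 2).
Proof.
case: n hn => [|[|m]] // _; rewrite !subSS !subn0.
have T_SS : T m.+2 = (T m + m.*2 + 3)%N by rewrite !T_binomial !binS !bin1 !bin0; lia.
have rankA : \rank (Amx K m) = (2 * m.+1)%N.
  by have := rank_Amx_ge K m; have := rank_Amx_lt K m; lia.
split; first by rewrite dimgE T_SS; lia.
split; first exact: rankA.
split; first by rewrite /ncasimir rankA dimgE; lia.
by rewrite central_basisE card_imset ?card_zidx //; apply: inr_inj.
Qed.
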